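(* $V^{\otimes3}=[\omega_0,V]\oplus(V\otimes Q)$.
   Context: $\mathbb{K}$ is a field of characteristic zero and $V$ a symplectic $\mathbb{K}$-vector space of dimension $2g$ with symplectic basis $a_1,\ldots,a_g,b_1,\ldots,b_g$; $\omega_0=\sum_{i=1}^g(a_i\otimes b_i-b_i\otimes a_i)\in V^{\otimes2}$. $C\colon V^{\otimes2}\to\mathbb{K}$ is the pairing given by the symplectic form, $C(a_i\otimes b_j)=\delta_{ij}$, $C(b_i\otimes a_j)=-\delta_{ij}$, $C(a_i\otimes a_j)=C(b_i\otimes b_j)=0$, and $Q=\ker C$. $[\omega_0,V]=\{\omega_0 v-v\omega_0: v\in V\}\subset V^{\otimes3}$ (products in the tensor algebra). *)

(* Coordinate model of the symplectic space V = K^(2g)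
   with symplectic basis a_i = e_(lshift g i), b_i = e_(rshift g i). *)
From mathcomp Require Import all_boot all_algebra.
Set Implicit Arguments. Unset Strict Implicit. Unset Printing Implicit Defensive.
Import GRing.Theory.
Local Open Scope ring_scope.

Section Tensors.
Variables (K : fieldType) (g : nat).
Notation n := (g + g)%N.

Definition Vsp := {ffun 'I_n -> K}.
Definition V2 := {ffun 'I_n * 'I_n -> K}.
Definition V3 := {ffun 'I_n * 'I_n * 'I_n -> K}.

Definition aidx (i : 'I_g) : 'I_n := lshift g i.
Definition bidx (i : 'I_g) : 'I_n := rshift g i.
Definition evec (x : 'I_n) : Vsp := [ffun y => (y == x)%:R].

Definition tens11 (v w : Vsp) : V2 := [ffun p => v p.1 * w p.2].
Definition tens12 (v : Vsp) (w : V2) : V3 :=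
  [ffun t => v t.1.1 * w (t.1.2, t.2)].
Definition tens21 (w : V2) (v : Vsp) : V3 :=
  [ffun t => w (t.1.1, t.1.2) * v t.2].

Definition omega0 : V2 :=
  \sum_(i < g) (tens11 (evec (aidx i)) (evec (bidx i))
               - tens11 (evec (bidx i)) (evec (aidx i))).

(* the contraction C : V^{(x)2} -> K, linear extension of
   C(a_i b_j) = delta_ij, C(b_i a_j) = - delta_ij, C(a a) = C(b b) = 0 *)
Definition Cpair (w : V2) : K :=
  \sum_(i < g) (w (aidx i, bidx i) - w (bidx i, aidx i)).

Definition inQ (w : V2) : Prop := Cpair w = 0.

Definition in_bracket (t : V3) : Prop :=
  exists v : Vsp, t = tens21 omega0 v - tens12 v omega0.

Definition in_VQ (t : V3) : Prop :=
  exists s : seq (Vsp * V2),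
    (forall p, p \in s -> inQ p.2) /\ t = \sum_(p <- s) tens12 p.1 p.2.

End Tensors.

(* Contracting the last two tensor factors with C gives a linear map
   c : V^(x)3 -> V whose kernel is exactly V (x) Q.  On the bracket it acts
   as a scalar: c (omega_0 v - v omega_0) = -(2g + 1) v, because contracting
   omega_0 against v returns -v while C(omega_0) = 2g.  In characteristic
   zero 2g + 1 is invertible, so w := [omega_0, -(2g + 1)^-1 c t] satisfies
   c (t - w) = 0, and a bracket lying in V (x) Q is the bracket of 0. *)
From HB Require Import structures.
From mathcomp Require Import all_boot all_algebra.
Import GRing.Theory.
Local Open Scope ring_scope.

Lemma sum_delta (R : pzSemiRingType) (n : nat) (i : 'I_n) (F : 'I_n -> R) :
  \sum_(j < n) (i == j)%:R * F j = F i.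
Proof.
rewrite (bigD1 i) //= eqxx mul1r big1 ?addr0 // => j.
by rewrite eq_sym => /negbTE->; rewrite mul0r.
Qed.

Section Contraction.
Variables (K : fieldType) (g : nat).

Lemma eq_aidx (i j : 'I_g) : (aidx i == aidx j) = (i == j).
Proof. by apply/eqP/eqP => [/(congr1 val)/=/val_inj|->]. Qed.

Lemma eq_bidx (i j : 'I_g) : (bidx i == bidx j) = (i == j).
Proof. by apply/eqP/eqP => [/(congr1 val)/=/addnI/val_inj|->]. Qed.

Lemma eq_aidx_bidx (i j : 'I_g) : (aidx i == bidx j) = false.
Proof.
apply/eqP => /(congr1 val) /= ij.
by have := ltn_ord i; rewrite ij ltnNge leq_addr.
Qed.

Lemma eq_bidx_aidx (i j : 'I_g) : (bidx i == aidx j) = false.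
Proof. by rewrite eq_sym eq_aidx_bidx. Qed.

Lemma aidx_or_bidx (x : 'I_(g + g)) :
  (exists k, x = aidx k) \/ (exists k, x = bidx k).
Proof. by have [k xk|k xk] := splitP x; [left|right]; exists k; apply/val_inj. Qed.

Lemma omega0E x y : omega0 K g (x, y) =
  \sum_(i < g) ((x == aidx i)%:R * (y == bidx i)%:R
              - (x == bidx i)%:R * (y == aidx i)%:R).
Proof. by rewrite /omega0 sum_ffunE; apply: eq_bigr => i _; rewrite !ffunE. Qed.

Lemma omega0_ab k l : omega0 K g (aidx k, bidx l) = (k == l)%:R.
Proof.
rewrite omega0E; under eq_bigr do rewrite !eq_aidx !eq_bidx eq_aidx_bidx mul0r subr0.
by rewrite sum_delta eq_sym.
Qed.

Lemma omega0_ba k l : omega0 K g (bidx k, aidx l) = - (k == l)%:R.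
Proof.
rewrite omega0E; under eq_bigr do rewrite !eq_aidx !eq_bidx eq_bidx_aidx mul0r sub0r.
by rewrite sumrN sum_delta eq_sym.
Qed.

Lemma omega0_aa k l : omega0 K g (aidx k, aidx l) = 0.
Proof. by rewrite omega0E big1 // => i _; rewrite !eq_aidx_bidx mulr0 mul0r subrr. Qed.

Lemma omega0_bb k l : omega0 K g (bidx k, bidx l) = 0.
Proof. by rewrite omega0E big1 // => i _; rewrite !eq_bidx_aidx mulr0 mul0r subrr. Qed.

Lemma Cpair_omega0 : Cpair (omega0 K g) = (g + g)%:R.
Proof.
rewrite /Cpair (eq_bigr (fun _ => 1 + 1)) => [|i _]; last first.
  by rewrite omega0_ab omega0_ba eqxx opprK.
by rewrite big_split /= sumr_const card_ord natrD.
Qed.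

Definition contract23 (t : V3 K g) : Vsp K g :=
  [ffun x => Cpair [ffun p : 'I_(g + g) * 'I_(g + g) => t (x, p.1, p.2)]].

Lemma contract23_is_zmod_morphism : zmod_morphism contract23.
Proof.
move=> t1 t2; apply/ffunP => x; rewrite !ffunE /Cpair -sumrB.
by apply: eq_bigr => i _; rewrite !ffunE /= !opprD addrACA.
Qed.

HB.instance Definition _ :=
  GRing.isZmodMorphism.Build (V3 K g) (Vsp K g) contract23
    contract23_is_zmod_morphism.

Lemma contract23_tens12 v w : contract23 (tens12 v w) = [ffun x => v x * Cpair w].
Proof.
apply/ffunP => x; rewrite !ffunE /Cpair mulr_sumr.
by apply: eq_bigr => i _; rewrite !ffunE /= mulrBr.
Qed.

Lemma contract23_omega0_tens21 v : contract23 (tens21 (omega0 K g) v) = - v.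
Proof.
apply/ffunP => x; rewrite !ffunE /Cpair; case: (aidx_or_bidx x) => -[k ->].
  under eq_bigr do rewrite !ffunE /= omega0_aa omega0_ab mul0r sub0r.
  by rewrite sumrN sum_delta.
under eq_bigr do rewrite !ffunE /= omega0_bb omega0_ba mul0r subr0 mulNr.
by rewrite sumrN sum_delta.
Qed.

Definition bracket_omega0 (v : Vsp K g) : V3 K g :=
  tens21 (omega0 K g) v - tens12 v (omega0 K g).

Lemma contract23_bracket v :
  contract23 (bracket_omega0 v) = [ffun x => - (1 + (g + g)%:R) * v x].
Proof.
rewrite raddfB /= contract23_omega0_tens21 contract23_tens12 Cpair_omega0.
by apply/ffunP => x; rewrite !ffunE mulrC mulNr mulrDl mul1r opprD.
Qed.

Lemma bracket_omega0_0 : bracket_omega0 0 = 0.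
Proof. by apply/ffunP => t; rewrite !ffunE /= mulr0 mul0r subrr. Qed.

Lemma in_VQ_contract23_eq0 t : in_VQ t <-> contract23 t = 0.
Proof.
split=> [[s [sQ ->]]|t0].
  rewrite raddf_sum /=; apply/ffunP => x; rewrite sum_ffunE ffunE.
  by rewrite big1_seq // => p ps; rewrite contract23_tens12 ffunE (sQ p ps) mulr0.
exists [seq (evec K x, [ffun p : 'I_(g + g) * 'I_(g + g) => t (x, p.1, p.2)])
       | x <- enum 'I_(g + g)]; split.
  by move=> _ /mapP[x _ ->]; move/ffunP/(_ x): t0; rewrite !ffunE.
rewrite big_map big_enum /=; apply/ffunP => -[[x y] z].
rewrite sum_ffunE (bigD1 x) //= big1 ?addr0 => [|j /negbTE jx].
  by rewrite !ffunE /= eqxx mul1r.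
by rewrite !ffunE /= eq_sym jx mul0r.
Qed.

End Contraction.

Arguments contract23 {K g}.
Arguments bracket_omega0 {K g}.

Theorem lemma5p1 (K : fieldType) (g : nat) (charK : [pchar K] =i pred0) :
  (forall t : V3 K g, exists w u : V3 K g,
      in_bracket w /\ in_VQ u /\ t = w + u) /\
  (forall t : V3 K g, in_bracket t -> in_VQ t -> t = 0).
Proof.
set c : K := 1 + (g + g)%:R.
have c_neq0 : c != 0 by move/pcharf0P: charK => char0; rewrite /c nat1r char0.
split=> [t|t [v ->] /in_VQ_contract23_eq0].
  pose w := bracket_omega0 [ffun x => - c^-1 * contract23 t x].
  exists w, (t - w); split; first by eexists.
  split; last by rewrite addrC subrK.
  apply/in_VQ_contract23_eq0; rewrite raddfB /= contract23_bracket.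
  by apply/ffunP => x; rewrite !ffunE mulrA mulrNN mulfV // mul1r subrr.
rewrite contract23_bracket => /ffunP contract0.
suff -> : v = 0 by exact: bracket_omega0_0.
apply/ffunP => x; move/eqP: (contract0 x); rewrite !ffunE.
by rewrite mulf_eq0 oppr_eq0 (negbTE c_neq0) => /eqP.
Qed.
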